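(* Let $X$ be a metric space with bounded geometry. For every $q,k\geq 1$, $\mathrm{TO}^{q+k}_{X\times\mathbb{R}^k}(r) \lesssim \mathrm{TO}^q_X(r)\,\mathrm{TO}^k_{\mathbb{R}^k}(r) \simeq \mathrm{TO}^q_X(r)$.
   Context: $\mathbb R^k$ has the Euclidean metric and $X\times\mathbb R^k$ the $\ell^\infty$ product metric. Bounded geometry: for every $R\ge r>0$ each ball of radius $R$ is covered by a uniformly bounded number of balls of radius $r$. For $Z\subseteq X$, $\mathrm{Cov}^1(Z)$ is the minimal number of closed radius-$1$ balls of $X$ covering $Z$. For continuous $f:Z\to\mathbb R^q$, $\mathrm{Ov}(f)=\sup_{z}\mathrm{Cov}^1(f^{-1}(z))$, $\mathrm{TO}^q(Z)=\min_f\mathrm{Ov}(f)$, $\mathrm{TO}^q_X(r)=\max\{\mathrm{TO}^q(Z): Z\subseteq X,\mathrm{Cov}^1(Z)\le r\}$. $f\lesssim g$ means there is $C$ with $f(r)\le Cg(Cr)+C$ for all $r$; $\simeq$ means both directions. *)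

From HB Require Import structures.
From mathcomp Require Import all_boot all_order all_algebra.
From mathcomp Require Import all_classical all_reals.
From mathcomp Require Import ereal.
Set Implicit Arguments. Unset Strict Implicit. Unset Printing Implicit Defensive.
Import Order.TTheory GRing.Theory Num.Theory.
Local Open Scope classical_set_scope.
Local Open Scope ring_scope.
Local Open Scope ereal_scope.

Section Defs.
Variable R : realType.

Definition is_metric (T : Type) (d : T -> T -> R) : Prop :=
  [/\ forall x y, d x y = 0 <-> x = y,
      forall x y, d x y = d y x &
      forall x y z, d x z <= d x y + d y z]%R.

Definition cball (T : Type) (d : T -> T -> R) (x : T) (e : R) : set T :=
  [set y | (d x y <= e)%R].

Definition bounded_geometry (T : Type) (d : T -> T -> R) : Prop :=
  forall R0 r : R, (0 < r)%R -> (r <= R0)%R ->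
    exists N : nat, forall x : T, exists n : nat, (n <= N)%N /\
      exists c : 'I_n -> T, cball d x R0 `<=` [set y | exists i, cball d (c i) r y].

Definition deucl (k : nat) (u v : 'rV[R]_k) : R :=
  Num.sqrt (\sum_(i < k) (u ord0 i - v ord0 i) ^+ 2)%R.

Definition prod_dist (T : Type) (d : T -> T -> R) (k : nat)
  (p p' : T * 'rV[R]_k) : R := Num.max (d p.1 p'.1) (deucl p.2 p'.2).

(* Cov^1(Z): minimal number of closed radius-1 balls covering Z (+oo if none) *)
Definition Cov1 (T : Type) (d : T -> T -> R) (Z : set T) : \bar R :=
  ereal_inf [set (n%:R)%:E | n in [set n : nat |
     exists c : 'I_n -> T, Z `<=` [set y | exists i, cball d (c i) 1%R y]]].

(* continuity of f on Z (i.e. of the restriction f|_Z w.r.t. the subspace metric) *)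
Definition cont_on (T : Type) (d : T -> T -> R) (q : nat) (Z : set T)
  (f : T -> 'rV[R]_q) : Prop :=
  forall x, Z x -> forall e : R, (0 < e)%R -> exists2 del : R, (0 < del)%R &
    forall y, Z y -> (d x y < del)%R -> (deucl (f x) (f y) < e)%R.

Definition Ov (T : Type) (d : T -> T -> R) (q : nat) (Z : set T)
  (f : T -> 'rV[R]_q) : \bar R :=
  ereal_sup (range (fun z : 'rV[R]_q => Cov1 d (Z `&` f @^-1` [set z]))).

Definition TO (T : Type) (d : T -> T -> R) (q : nat) (Z : set T) : \bar R :=
  ereal_inf [set Ov d Z f | f in [set f : T -> 'rV[R]_q | cont_on d Z f]].

Definition TOX (T : Type) (d : T -> T -> R) (q : nat) (r : R) : \bar R :=
  ereal_sup [set TO d q Z | Z in [set Z : set T | Cov1 d Z <= r%:E]].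

Definition lesssim (f g : R -> \bar R) : Prop :=
  exists C : R, (0 < C)%R /\
    forall r : R, (0 <= r)%R -> f r <= C%:E * g (C * r)%R + C%:E.

Definition simeq (f g : R -> \bar R) : Prop := lesssim f g /\ lesssim g f.

End Defs.

From HB Require Import structures.
From mathcomp Require Import all_boot all_order all_algebra.
From mathcomp Require Import all_classical all_reals.
From mathcomp Require Import ereal.
Set Implicit Arguments. Unset Strict Implicit. Unset Printing Implicit Defensive.
Import Order.TTheory GRing.Theory Num.Theory.
Local Open Scope ring_scope.
Local Open Scope ereal_scope.
Local Open Scope classical_set_scope.

(* If g : π(Z) -> R^q is continuous, then f(x, v) = (g x, v) is continuous on
   Z ⊆ X × R^k and each fibre of f projects into a fibre of g at a single
   height v, so a cover of the g-fibre by unit balls lifts to one of the same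
   size.  Since also Cov^1(π Z) <= Cov^1(Z), this gives
   TO^{q+k}_{X×R^k} <= TO^q_X.  The identity of R^k has points as fibres, so
   TO^k_{R^k}(r) = 1 for r >= 1, and the product TO^q_X · TO^k_{R^k} agrees
   with TO^q_X there.  For r < 1 every quantity lies in [0, r], which the
   additive constant of <~ absorbs. *)

Section CoveringNumber.
Variables (R : realType) (T : Type) (d : T -> T -> R).

Lemma Cov1_le_of_covers (T' : Type) (d' : T' -> T' -> R) (A : set T) (B : set T') :
  (forall n (c : 'I_n -> T), A `<=` [set y | exists i, cball d (c i) 1%R y] ->
     exists c' : 'I_n -> T', B `<=` [set y | exists i, cball d' (c' i) 1%R y]) ->
  Cov1 d' B <= Cov1 d A.
Proof.
move=> lift; apply: ereal_inf_le_tmp => _ [n [c Ac] <-].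
by exists n => //; apply: lift Ac.
Qed.

Lemma Cov1_subset (A B : set T) : B `<=` A -> Cov1 d B <= Cov1 d A.
Proof. by move=> BA; apply: Cov1_le_of_covers => n c Ac; exists c => x /BA /Ac. Qed.

Lemma Cov1_ge0 (A : set T) : 0 <= Cov1 d A.
Proof. by apply: le_ereal_inf_tmp => _ [n _ <-]; rewrite lee_fin ler0n. Qed.

Lemma Cov1_set0 : Cov1 d set0 = 0.
Proof.
apply/le_anti; rewrite Cov1_ge0 andbT.
have no_centres : 'I_0 -> T by case.
by apply: ereal_inf_lbound; exists 0%N => //; exists no_centres.
Qed.

Lemma Cov1_ge1 (A : set T) (x : T) : A x -> 1 <= Cov1 d A.
Proof.
move=> Ax; apply: le_ereal_inf_tmp => _ [n [c Ac] <-].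
have [i _] := Ac x Ax.
by rewrite lee_fin ler1n (leq_ltn_trans (leq0n i) (ltn_ord i)).
Qed.

Lemma Cov1_set1 (x : T) : d x x = 0%R -> Cov1 d [set x] <= 1.
Proof.
move=> dxx; apply: ereal_inf_lbound; exists 1%N => //.
by exists (fun _ => x) => y /= ->; exists ord0; rewrite /cball /= dxx ler01.
Qed.

End CoveringNumber.

Section EuclideanDistance.
Variable R : realType.

Lemma deucl_xx (k : nat) (u : 'rV[R]_k) : deucl u u = 0%R.
Proof.
by rewrite /deucl big1 ?sqrtr0 // => i _; rewrite subrr expr0n.
Qed.

Lemma sqrtrD_le (a b : R) : (0 <= a)%R -> (0 <= b)%R ->
  (Num.sqrt (a + b) <= Num.sqrt a + Num.sqrt b)%R.
Proof.
move=> a0 b0.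
rewrite -[X in (_ <= X)%R]ger0_norm ?addr_ge0 ?sqrtr_ge0 // -sqrtr_sqr ler_sqrt //.
rewrite sqrrD !sqr_sqrtr // -addrA lerD2l lerDr.
by rewrite mulrn_wge0 // mulr_ge0 // sqrtr_ge0.
Qed.

Lemma deucl_row_mx_le (q k : nat) (a a' : 'rV[R]_q) (b b' : 'rV[R]_k) :
  (deucl (row_mx a b) (row_mx a' b') <= deucl a a' + deucl b b')%R.
Proof.
rewrite /deucl big_split_ord /=.
under eq_bigr do rewrite !row_mxEl.
under [X in (_ + X)%R]eq_bigr do rewrite !row_mxEr.
by apply: sqrtrD_le; apply: sumr_ge0 => i _; apply: sqr_ge0.
Qed.

End EuclideanDistance.

Section TopologicalOverlap.
Variables (R : realType) (T : Type) (d : T -> T -> R).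

Lemma cont_on_cst (q : nat) (Z : set T) (z : 'rV[R]_q) : cont_on d Z (fun=> z).
Proof. by move=> x _ e e0; exists 1%R => // y _ _; rewrite deucl_xx. Qed.

Lemma Ov_ge0 (q : nat) (Z : set T) (f : T -> 'rV[R]_q) : 0 <= Ov d Z f.
Proof.
apply: le_ereal_sup_tmp; exists (Cov1 d (Z `&` f @^-1` [set 0%R])).
  by exists 0%R.
exact: Cov1_ge0.
Qed.

Lemma TO_ge0 (q : nat) (Z : set T) : 0 <= TO d q Z.
Proof. by apply: le_ereal_inf_tmp => _ [f _ <-]; apply: Ov_ge0. Qed.

Lemma TO_le_Ov (q : nat) (Z : set T) (f : T -> 'rV[R]_q) :
  cont_on d Z f -> TO d q Z <= Ov d Z f.
Proof. by move=> fc; apply: ereal_inf_lbound; exists f. Qed.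

Lemma TO_le_Cov1 (q : nat) (Z : set T) : TO d q Z <= Cov1 d Z.
Proof.
apply: le_trans (TO_le_Ov (cont_on_cst (0 : 'rV[R]_q))) _.
by apply: ge_ereal_sup => _ [z _ <-]; apply: Cov1_subset => x [].
Qed.

Lemma TOX_le (q : nat) (r : R) : TOX d q r <= r%:E.
Proof.
by apply: ge_ereal_sup => _ [Z Zr <-]; apply: le_trans (TO_le_Cov1 q Z) Zr.
Qed.

Lemma TOX_ge0 (q : nat) (r : R) : (0 <= r)%R -> 0 <= TOX d q r.
Proof.
move=> r0; apply: le_ereal_sup_tmp; exists (TO d q set0); last exact: TO_ge0.
by exists set0 => //=; rewrite Cov1_set0 lee_fin.
Qed.

End TopologicalOverlap.

Section Euclidean.
Variables (R : realType) (k : nat).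

Lemma cont_on_id (Z : set 'rV[R]_k) : cont_on (@deucl R k) Z id.
Proof. by move=> x _ e e0; exists e. Qed.

Lemma TOX_eucl_le1 (r : R) : TOX (@deucl R k) k r <= 1.
Proof.
apply: ge_ereal_sup => _ [Z _ <-]; apply: le_trans (TO_le_Ov (@cont_on_id Z)) _.
apply: ge_ereal_sup => _ [z _ <-].
have fibre_sub : Z `&` id @^-1` [set z] `<=` [set z] by move=> x [].
exact: le_trans (Cov1_subset _ fibre_sub) (Cov1_set1 (deucl_xx z)).
Qed.

Lemma TOX_eucl_ge1 (r : R) : (1 <= r)%R -> 1 <= TOX (@deucl R k) k r.
Proof.
move=> r1; apply: le_ereal_sup_tmp; exists (TO (@deucl R k) k [set 0%R]).
  exists [set 0%R] => //=.
  by apply: le_trans (Cov1_set1 (deucl_xx 0%R)) _; rewrite lee_fin.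
apply: le_ereal_inf_tmp => _ [f _ <-].
apply: le_ereal_sup_tmp; exists (Cov1 (@deucl R k) ([set 0%R] `&` f @^-1` [set f 0%R])).
  by exists (f 0%R).
by apply: (Cov1_ge1 _ (x := 0%R)).
Qed.

Lemma TOX_eucl_eq1 (r : R) : (1 <= r)%R -> TOX (@deucl R k) k r = 1.
Proof. by move=> r1; apply/le_anti; rewrite TOX_eucl_le1 TOX_eucl_ge1. Qed.

End Euclidean.

Section Product.
Variables (R : realType) (X : Type) (d : X -> X -> R) (q k : nat).
Let dprod := @prod_dist R X d k.

Lemma cont_on_row_mx (Z : set (X * 'rV[R]_k)) (g : X -> 'rV[R]_q) :
  cont_on d (fst @` Z) g -> cont_on dprod Z (fun p => row_mx (g p.1) p.2).
Proof.
move=> gc p Zp e e0; have e20 : (0 < e / 2)%R by rewrite divr_gt0.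
have [del del0 gdel] := gc p.1 (ex_intro2 _ _ p Zp erefl) (e / 2)%R e20.
exists (Num.min del (e / 2))%R; first by rewrite lt_min del0 e20.
move=> p' Zp'; rewrite /dprod /prod_dist lt_min !gt_max.
move=> /andP[/andP[near_x _] /andP[_ near_v]].
apply: le_lt_trans (deucl_row_mx_le (g p.1) (g p'.1) p.2 p'.2) _.
by rewrite [e]splitr ltrD //; apply: gdel => //; exists p'.
Qed.

Lemma Ov_row_mx_le (Z : set (X * 'rV[R]_k)) (g : X -> 'rV[R]_q) :
  Ov dprod Z (fun p => row_mx (g p.1) p.2) <= Ov d (fst @` Z) g.
Proof.
apply: ge_ereal_sup => _ [w _ <-].
apply: le_ereal_sup_tmp; exists (Cov1 d (fst @` Z `&` g @^-1` [set lsubmx w])).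
  by exists (lsubmx w).
apply: Cov1_le_of_covers => n c cover; exists (fun i => (c i, rsubmx w)).
move=> p [Zp /= fpw].
have gp : g p.1 = lsubmx w by rewrite -fpw row_mxKl.
have [i pi] := cover p.1 (conj (ex_intro2 _ _ p Zp erefl) gp).
exists i; rewrite /cball /prod_dist /= ge_max pi -fpw row_mxKr deucl_xx.
exact: ler01.
Qed.

Lemma TO_prod_le (Z : set (X * 'rV[R]_k)) :
  TO dprod (q + k) Z <= TO d q (fst @` Z).
Proof.
apply: le_ereal_inf_tmp => _ [g gc <-].
exact: le_trans (TO_le_Ov (cont_on_row_mx gc)) (Ov_row_mx_le Z g).
Qed.

Lemma Cov1_fst_le (Z : set (X * 'rV[R]_k)) : Cov1 d (fst @` Z) <= Cov1 dprod Z.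
Proof.
apply: Cov1_le_of_covers => n c cover; exists (fun i => (c i).1).
move=> _ [p Zp <-]; have [i] := cover p Zp.
by rewrite /cball /dprod /prod_dist /= ge_max => /andP[pi _]; exists i.
Qed.

Lemma TOX_prod_le (r : R) : TOX dprod (q + k) r <= TOX d q r.
Proof.
apply: ge_ereal_sup => _ [Z Zr <-]; apply: le_trans (TO_prod_le Z) _.
by apply: ereal_sup_ubound; exists (fst @` Z) => //; apply: le_trans (Cov1_fst_le Z) Zr.
Qed.

End Product.

Lemma lesssim_of_le_ge1 (R : realType) (f g : R -> \bar R) :
  (forall r, (0 <= r)%R -> 0 <= g r) ->
  (forall r, (0 <= r)%R -> f r <= r%:E) ->
  (forall r, (1 <= r)%R -> f r <= g r) ->
  lesssim f g.
Proof.
move=> g0 f_le_r fg; exists 1%R; split => // r r0; rewrite mul1r mul1e.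
have [r1 | r1] := lerP 1 r; first exact: le_trans (fg r r1) (leeDl _ _).
apply: le_trans (f_le_r r r0) _; apply: le_trans (_ : 1%:E <= _).
  by rewrite lee_fin ltW.
by rewrite leeDr // g0.
Qed.

Theorem corollary1p10 (R : realType) (X : Type) (d : X -> X -> R) (q k : nat) :
  is_metric d -> bounded_geometry d -> (1 <= q)%N -> (1 <= k)%N ->
  lesssim (TOX (@prod_dist R X d k) (q + k))
          (fun r => TOX d q r * TOX (@deucl R k) k r) /\
  simeq (fun r => TOX d q r * TOX (@deucl R k) k r) (TOX d q).
Proof.
(* The bounds below hold without the metric, bounded-geometry and dimension hypotheses. *)
move=> _ _ _ _.
have prod_ge0 r : (0 <= r)%R -> 0 <= TOX d q r * TOX (@deucl R k) k r.
  by move=> r0; rewrite mule_ge0 // TOX_ge0.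
have prod_le r : (0 <= r)%R -> TOX d q r * TOX (@deucl R k) k r <= TOX d q r.
  move=> r0; rewrite -[leRHS]mule1.
  by apply: lee_pmul; rewrite ?TOX_ge0 ?TOX_eucl_le1.
have prod_eq r : (1 <= r)%R -> TOX d q r * TOX (@deucl R k) k r = TOX d q r.
  by move=> r1; rewrite TOX_eucl_eq1 // mule1.
split; [|split]; apply: lesssim_of_le_ge1 => // r.
- by move=> _; apply: TOX_le.
- by move=> r1; rewrite prod_eq //; apply: TOX_prod_le.
- exact: TOX_ge0.
- by move=> r0; apply: le_trans (prod_le r r0) (TOX_le _ _ _).
- by move=> r1; rewrite prod_eq.
- by move=> _; apply: TOX_le.
- by move=> r1; rewrite prod_eq.
Qed.
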